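(* Let $E\subseteq\mathbb{R}$, and let $\mathbf{AC}(E)$ be the set of Abel continuous functions on $E$, regarded as a subset of the space of all continuous real functions on $E$ equipped with the topology of uniform convergence on $E$. Then $\mathbf{AC}(E)$ is closed: if $f$ is a continuous function on $E$ and there is a sequence $(f_n)$ in $\mathbf{AC}(E)$ converging uniformly on $E$ to $f$, then $f\in\mathbf{AC}(E)$.
   Context: A sequence $(p_n)_{n\ge0}$ is Abel convergent to $\ell$ if $\sum_{k=0}^{\infty}p_k x^k$ converges for every $0\le x<1$ and $\lim_{x\to 1^-}(1-x)\sum_{k=0}^{\infty}p_k x^k=\ell$. A function $g:E\to\mathbb{R}$ is Abel continuous on $E$ if for every sequence $(p_n)$ in $E$ Abel convergent to some $\ell\in E$, $(g(p_n))$ is Abel convergent to $g(\ell)$. *)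

From Stdlib Require Import Reals.
From Coquelicot Require Import Coquelicot.
Open Scope R_scope.

Definition abel_convergent (p : nat -> R) (l : R) : Prop :=
  (forall x : R, 0 <= x < 1 -> ex_series (fun k => p k * x ^ k)) /\
  filterlim (fun x => (1 - x) * Series (fun k => p k * x ^ k))
            (at_left 1) (locally l).

Definition abel_continuous (E : R -> Prop) (g : R -> R) : Prop :=
  forall (p : nat -> R) (l : R),
    (forall n, E (p n)) -> E l -> abel_convergent p l ->
    abel_convergent (fun n => g (p n)) (g l).

Definition unif_conv_on (E : R -> Prop) (fn : nat -> R -> R) (f : R -> R) : Prop :=
  forall eps : R, 0 < eps -> exists N : nat,
    forall n x, (N <= n)%nat -> E x -> Rabs (fn n x - f x) < eps.

(** Abel convergence is stable under uniform approximation: a sequence whose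
    terms stay within [eps] of an Abel convergent sequence has Abel means
    within [eps] of the approximant's, since for [0 <= x < 1] the weights
    [(1 - x) x^k] sum to [1].  Composing with [f_n] and using that [f_n]
    approximates [f] uniformly on [E] then gives the theorem. *)

From Stdlib Require Import Reals Lra.
From Coquelicot Require Import Coquelicot.
Open Scope R_scope.

Section BoundedAbelMean.

Variables (d : nat -> R) (e x : R).
Hypothesis d_bounded : forall k, Rabs (d k) <= e.
Hypothesis x_unit : 0 <= x < 1.

Let geom_series : is_series (fun k => x ^ k) (/ (1 - x)).
Proof. apply is_series_geom. rewrite Rabs_pos_eq; lra. Qed.

Let term_abs_le : forall k, Rabs (d k * x ^ k) <= e * x ^ k.
Proof.
  intro k. rewrite Rabs_mult, (Rabs_pos_eq (x ^ k)) by (apply pow_le; lra).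
  apply Rmult_le_compat_r; [apply pow_le; lra | apply d_bounded].
Qed.

Let ex_series_abs : ex_series (fun k => Rabs (d k * x ^ k)).
Proof.
  apply (@ex_series_le R_AbsRing R_CompleteNormedModule _ (fun k => e * x ^ k)).
  - intro k. unfold norm; simpl; unfold abs; simpl.
    rewrite Rabs_Rabsolu. apply term_abs_le.
  - exists (e * / (1 - x)). apply (is_series_scal_l e _ _ geom_series).
Qed.

Lemma ex_series_bounded_geom : ex_series (fun k => d k * x ^ k).
Proof. now apply ex_series_Rabs. Qed.

Lemma abel_mean_bounded : Rabs ((1 - x) * Series (fun k => d k * x ^ k)) <= e.
Proof.
  assert (Series_abs_le : Rabs (Series (fun k => d k * x ^ k)) <= e * / (1 - x)).
  { eapply Rle_trans; [apply Series_Rabs, ex_series_abs |].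
    rewrite <- (is_series_unique _ _ geom_series), <- Series_scal_l.
    apply Series_le; [intro k; split; [apply Rabs_pos | apply term_abs_le] |].
    exists (e * / (1 - x)). apply (is_series_scal_l e _ _ geom_series). }
  rewrite Rabs_mult, (Rabs_pos_eq (1 - x)) by lra.
  apply Rle_trans with ((1 - x) * (e * / (1 - x))); [apply Rmult_le_compat_l; lra |].
  right. field. lra.
Qed.

End BoundedAbelMean.

Lemma Series_bounded_perturbation (p q : nat -> R) (e x : R) :
  (forall k, Rabs (p k - q k) <= e) -> 0 <= x < 1 ->
  ex_series (fun k => q k * x ^ k) ->
  ex_series (fun k => p k * x ^ k) /\
  Series (fun k => p k * x ^ k) =
    Series (fun k => q k * x ^ k) + Series (fun k => (p k - q k) * x ^ k).
Proof.
  intros close x_unit ex_q.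
  pose proof (ex_series_bounded_geom _ _ _ close x_unit) as ex_diff.
  assert (split_term : forall k,
            q k * x ^ k + (p k - q k) * x ^ k = p k * x ^ k) by (intro; ring).
  split.
  - eapply ex_series_ext; [exact split_term |].
    now apply (@ex_series_plus R_AbsRing R_NormedModule).
  - rewrite <- Series_plus by assumption. now apply Series_ext.
Qed.

Lemma at_left_1_unit_interval : at_left 1 (fun x => 0 <= x < 1).
Proof.
  exists (mkposreal 1 Rlt_0_1). intros y near_1 y_lt.
  unfold ball in near_1; simpl in near_1; unfold AbsRing_ball, abs, minus, plus, opp in near_1;
  simpl in near_1. apply Rabs_lt_between in near_1. lra.
Qed.

Lemma abel_convergent_uniform_approx (p : nat -> R) (l : R) :
  (forall eps, 0 < eps -> exists (q : nat -> R) (m : R),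
     abel_convergent q m /\ (forall k, Rabs (p k - q k) <= eps) /\ Rabs (m - l) <= eps) ->
  abel_convergent p l.
Proof.
  intro approx. split.
  - intros x x_unit.
    destruct (approx 1 Rlt_0_1) as (q & m & [ex_q _] & close & _).
    exact (proj1 (Series_bounded_perturbation p q 1 x close x_unit (ex_q x x_unit))).
  - apply filterlim_locally. intro eps.
    assert (eps3_pos : 0 < eps / 3) by (destruct eps; simpl; lra).
    destruct (approx _ eps3_pos) as (q & m & [ex_q lim_q] & close & lim_close).
    pose proof (proj1 (filterlim_locally _ _) lim_q (mkposreal _ eps3_pos)) as near_m.
    generalize (filter_and _ _ near_m at_left_1_unit_interval). apply filter_imp.
    intros x [mean_q_close x_unit].
    change (Rabs ((1 - x) * Series (fun k => p k * x ^ k) - l) < eps).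
    change (Rabs ((1 - x) * Series (fun k => q k * x ^ k) - m) < eps / 3) in mean_q_close.
    rewrite (proj2 (Series_bounded_perturbation p q _ x close x_unit (ex_q x x_unit))).
    pose proof (abel_mean_bounded _ _ _ close x_unit) as mean_diff_small.
    set (A := Series (fun k => q k * x ^ k)) in *.
    set (B := Series (fun k => (p k - q k) * x ^ k)) in *.
    replace ((1 - x) * (A + B) - l)
      with (((1 - x) * A - m) + (1 - x) * B + (m - l)) by ring.
    eapply Rle_lt_trans; [apply Rabs_triang |].
    eapply Rle_lt_trans; [apply Rplus_le_compat_r, Rabs_triang |].
    lra.
Qed.

Theorem theorem9 (E : R -> Prop) (f : R -> R) (fn : nat -> R -> R) :
  continuous_on E f ->
  (forall n, continuous_on E (fn n)) ->
  (forall n, abel_continuous E (fn n)) ->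
  unif_conv_on E fn f ->
  abel_continuous E f.
Proof.
  intros _ _ fn_abel fn_unif p l p_in_E l_in_E p_abel.
  apply abel_convergent_uniform_approx. intros eps eps_pos.
  destruct (fn_unif eps eps_pos) as [N fn_close].
  exists (fun k => fn N (p k)), (fn N l). repeat split.
  - now apply (fn_abel N p l).
  - now apply (fn_abel N p l).
  - intro k. rewrite Rabs_minus_sym. left. now apply fn_close.
  - left. now apply fn_close.
Qed.
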